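(* There exists a function $g: \mathbb{N} \times \mathbb{N} \rightarrow \mathbb{N}$ such that, for all positive integers $\ell,d$, if a matroid $M$ has at least $g(\ell,d)$ distinct $\ell$-element circuits, then $M$ has a collection of $d$ pairwise disjoint circuits.
   Context: $\mathbb{N}$ denotes the set of positive integers. *)

From mathcomp Require Import all_boot.
Set Implicit Arguments. Unset Strict Implicit. Unset Printing Implicit Defensive.

Record matroid (T : finType) := Matroid {
  indep : pred {set T};
  indep0 : indep set0;
  indep_sub : forall A B : {set T}, A \subset B -> indep B -> indep A;
  indep_aug : forall A B : {set T}, indep A -> indep B -> #|A| < #|B| ->
      exists2 x, x \in B :\: A & indep (x |: A)
}.

Definition circuit (T : finType) (M : matroid T) (C : {set T}) : bool :=
  minset (fun X : {set T} => ~~ indep M X) C.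

Definition circuits_of_size (T : finType) (M : matroid T) (l : nat) : {set {set T}} :=
  [set C | circuit M C & #|C| == l].

From mathcomp Require Import all_boot zify.

Set Implicit Arguments. Unset Strict Implicit. Unset Printing Implicit Defensive.

(* Call A a completion of K when A is disjoint from K and A :|: K is a
   circuit.  By induction on l, at least packing_bound l m completions of K
   of size l yield m pairwise disjoint sets D with D :|: K dependent.  Take a
   maximal family G of pairwise disjoint completions; if it has fewer than m
   members, its union S has at most m * l points and meets every completion,
   so some x in S lies in more than N = packing_bound (l-1) (2m) of them.
   Then x |: K is independent, the sets A :\ x are (l-1)-element completions
   of x |: K, and induction gives 2m disjoint sets D with D :|: (x |: K)
   dependent.  Circuit elimination at x merges them in pairs into m disjoint
   sets D :|: D' with D :|: D' :|: K dependent.  For K = set0 each of these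
   dependent sets contains a circuit. *)

Lemma disjointsU (T : finType) (A B C : {set T}) :
  [disjoint A :|: B & C] = [disjoint A & C] && [disjoint B & C].
Proof. by rewrite !disjoints_subset subUset. Qed.

Lemma leq_card_bigcup (T I : finType) (P : {pred I}) (F : I -> {set T}) :
  #|\bigcup_(i in P) F i| <= \sum_(i in P) #|F i|.
Proof.
apply: (big_ind2 (fun (U : {set T}) n => #|U| <= n)) => // [|U1 n1 U2 n2 le1 le2].
  by rewrite cards0.
exact: leq_trans (leq_card_setU U1 U2).1 (leq_add le1 le2).
Qed.

Lemma leq_card_hitting (T : finType) (F : {set {set T}}) (S : {set T}) N :
  {in F, forall A : {set T}, exists2 x, x \in S & x \in A} ->
  {in S, forall x, #|[set A in F | x \in A]| <= N} ->
  #|F| <= #|S| * N.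
Proof.
move=> hitF small; rewrite -sum_nat_const.
apply: (@leq_trans (\sum_(x in S) #|[set A in F | x \in A]|)); last exact: leq_sum.
apply: leq_trans (leq_card_bigcup _ _); apply/subset_leq_card/subsetP => A AF.
by have [x xS xA] := hitF A AF; apply/bigcupP; exists x; rewrite ?inE ?AF.
Qed.

Lemma exists_hitting_packing (T : finType) (F : {set {set T}}) :
  set0 \notin F ->
  exists2 G : {set {set T}}, (G \subset F) && trivIset G &
    {in F, forall A : {set T}, exists2 x, x \in cover G & x \in A}.
Proof.
move=> F0; pose packing (G : {set {set T}}) := (G \subset F) && trivIset G.
have packing0 : packing set0 by rewrite /packing sub0set; apply/trivIsetP => A; rewrite inE.
have [G maxG _] := maxset_exists packing0; have /andP [GF tiG] := maxsetp maxG.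
exists G; rewrite ?GF // => A AF.
have [dAG | ] := boolP [disjoint A & cover G]; last first.
  by rewrite -setI_eq0 => /set0Pn [x /setIP [xA xG]]; exists x.
have [|tiAG AG] := @trivIsetU1 _ A G _ tiG (contra (subsetP GF set0) F0).
  by move=> B BG; apply: disjointWr dAG; apply: bigcup_sup.
have eAG := maxsetsup maxG (_ : packing (A |: G)) (subsetUr _ _).
by rewrite -eAG ?setU11 // in AG; rewrite /packing subUset sub1set AF GF.
Qed.

Lemma card_imset_setD1 (T : finType) (F : {set {set T}}) x :
  {in F, forall A : {set T}, x \in A} -> #|[set A :\ x | A in F]| = #|F|.
Proof.
move=> xF; apply: card_in_imset => A B AF BF eAB.
by rewrite -(setD1K (xF A AF)) eAB setD1K ?xF.
Qed.

Lemma card_imset_disjoint (T : finType) d (C : nat -> {set T}) :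
  (forall i, i < d -> C i != set0) ->
  (forall i j, i < d -> j < d -> i != j -> [disjoint C i & C j]) ->
  #|[set C (val i) | i : 'I_d]| = d.
Proof.
move=> C0 disjC; rewrite card_imset ?card_ord // => i j eCij; apply: val_inj.
apply/eqP; apply: contraNT (C0 i (ltn_ord i)) => neq_ij.
by have := disjC _ _ (ltn_ord i) (ltn_ord j) neq_ij; rewrite eCij -setI_eq0 setIid.
Qed.

Fixpoint packing_bound (l m : nat) : nat :=
  if l is l'.+1 then (m * l * packing_bound l' m.*2).+1 else 1.

Lemma packing_bound_gt0 l m : 0 < packing_bound l m.
Proof. by case: l. Qed.

Section Circuits.

Variables (T : finType) (M : matroid T).
Implicit Types (A B C D K U : {set T}) (x : T).
Local Notation indep := (indep M).

Lemma circuit_dep C : circuit M C -> ~~ indep C.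
Proof. by case/minsetP. Qed.

Lemma circuit_neq0 C : circuit M C -> C != set0.
Proof. by move/circuit_dep; apply: contraNneq => ->; apply: indep0. Qed.

Lemma circuit_proper_indep C A : circuit M C -> A \proper C -> indep A.
Proof.
case/minsetP=> _ minC ltAC; apply: contraT => depA.
by move: (ltAC); rewrite (minC A depA (proper_sub ltAC)) properxx.
Qed.

Lemma circuit_subset_eq C1 C2 :
  circuit M C1 -> circuit M C2 -> C1 \subset C2 -> C1 = C2.
Proof. by move/circuit_dep=> depC1 /minsetP [_ minC2]; apply: minC2. Qed.

Lemma dep_circuit D : ~~ indep D -> exists2 C, circuit M C & C \subset D.
Proof. by case/(@minset_exists _ [pred X | ~~ indep X]) => C; exists C. Qed.

Lemma circuit_setU1 B x :
  indep B -> ~~ indep (x |: B) -> exists2 C, circuit M C & (x \in C) && (C \subset x |: B).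
Proof.
move=> indepB /dep_circuit [C circC sCxB]; exists C; rewrite ?sCxB ?andbT //.
apply: contraT => xNC; move/circuit_dep: circC; apply: contraNT => _.
apply: indep_sub indepB; apply/subsetP => w wC.
by case/setU1P: (subsetP sCxB w wC) => // ewx; rewrite -ewx wC in xNC.
Qed.

Lemma indep_maxset_card U I J :
  maxset [pred X | indep X && (X \subset U)] J -> indep I -> I \subset U ->
  #|I| <= #|J|.
Proof.
move=> maxJ indepI sIU; have /andP [indepJ sJU] := maxsetp maxJ.
rewrite leqNgt; apply/negP => /(indep_aug indepJ indepI) [x /setDP [xI xNJ] indep_xJ].
have sxJU : x |: J \subset U by rewrite subUset sub1set (subsetP sIU) ?sJU.
have exJ := maxsetsup maxJ (_ : (x |: J) \in [pred X | indep X && (X \subset U)]) (subsetUr _ _).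
by rewrite -exJ ?setU11 // in xNJ; rewrite inE indep_xJ.
Qed.

Lemma circuit_elim C1 C2 x : circuit M C1 -> circuit M C2 -> C1 != C2 ->
  x \in C1 -> x \in C2 -> ~~ indep ((C1 :|: C2) :\ x).
Proof.
move=> circC1 circC2 neqC xC1 xC2; apply/negP => indepUx; set U := C1 :|: C2.
have [y yC1 yNC2] : exists2 y, y \in C1 & y \notin C2.
  by apply/subsetPn; apply: contraNN neqC => /(circuit_subset_eq circC1 circC2) ->.
pose indepU := [pred X | indep X && (X \subset U)].
have indepU_C1y : indepU (C1 :\ y).
  rewrite /= (circuit_proper_indep circC1 (properD1 yC1)).
  exact: subset_trans (subD1set _ _) (subsetUl _ _).
(* A maximal independent J with C1 :\ y \subset J \subset U misses y and a point
   of C2, so it is smaller than the independent set U :\ x. *)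
have [J maxJ sC1yJ] := maxset_exists indepU_C1y.
have /andP [indepJ sJU] := maxsetp maxJ.
have yNJ : y \notin J.
  apply: contraNN (circuit_dep circC1) => yJ; apply: indep_sub indepJ.
  by rewrite -(setD1K yC1) subUset sub1set yJ.
have [z zC2 zNJ] : exists2 z, z \in C2 & z \notin J.
  by apply/subsetPn; apply: contraNN (circuit_dep circC2) => /indep_sub; apply.
have ltJ : #|J| < #|U :\ y|.
  apply: proper_card; rewrite properE subsetD1 sJU yNJ /=.
  by apply/subsetPn; exists z; rewrite // !inE zC2 orbT andbT (memPn yNC2).
have eUxy : #|U :\ x| = #|U :\ y|.
  have xU : x \in U by rewrite inE xC1.
  have yU : y \in U by rewrite inE yC1.
  by apply/succn_inj; move: (cardsD1 x U) (cardsD1 y U); rewrite xU yU !add1n => <- <-.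
by move: ltJ; rewrite -eUxy ltnNge (indep_maxset_card maxJ indepUx (subD1set U x)).
Qed.

Lemma dep_setU_of_setU1 K D1 D2 x : indep (x |: K) -> [disjoint D1 & D2] ->
  ~~ indep (D1 :|: (x |: K)) -> ~~ indep (D2 :|: (x |: K)) ->
  ~~ indep (D1 :|: D2 :|: K).
Proof.
move=> indep_xK disjD dep1 dep2; apply/negP => indepD.
have through D : D \subset D1 :|: D2 -> ~~ indep (D :|: (x |: K)) ->
    exists2 C, circuit M C & (x \in C) && (C \subset x |: (D :|: K)).
  move=> sD depD; apply: circuit_setU1; last by rewrite setUCA.
  exact: indep_sub (setSU K sD) indepD.
have [C1 circC1 /andP [xC1 sC1]] := through D1 (subsetUl _ _) dep1.
have [C2 circC2 /andP [xC2 sC2]] := through D2 (subsetUr _ _) dep2.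
have neqC : C1 != C2.
  apply: contraNneq (circuit_dep circC1) => eC; apply: indep_sub indep_xK.
  have : C1 \subset (x |: (D1 :|: K)) :&: (x |: (D2 :|: K)) by rewrite subsetI sC1 eC.
  by rewrite -setUIr -setUIl (disjoint_setI0 disjD) set0U.
move: (circuit_elim circC1 circC2 neqC xC1 xC2); rewrite (indep_sub _ indepD) //.
apply/subsetP => w /setD1P [nwx /setUP [wC | wC]];
  [move: (subsetP sC1 w wC) | move: (subsetP sC2 w wC)];
  by rewrite !inE (negbTE nwx) /= => /orP [] ->; rewrite ?orbT.
Qed.

Definition completions K (l : nat) : {set {set T}} :=
  [set A : {set T} | [&& #|A| == l, [disjoint A & K] & circuit M (A :|: K)]].

Lemma completions0 l : completions set0 l = circuits_of_size M l.
Proof.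
by apply/setP => A; rewrite !inE setU0 -setI_eq0 setI0 eqxx /= andbC.
Qed.

Lemma completions_pivot_indep K l A1 A2 x :
  A1 \in completions K l -> A2 \in completions K l -> A1 != A2 ->
  x \in A1 -> x \in A2 -> indep (x |: K).
Proof.
rewrite !inE => /and3P [_ disjA1 circA1] /and3P [_ disjA2 circA2] neqA xA1 xA2.
apply: contraT => /dep_circuit [C circC sCxK].
have sxK A : x \in A -> x |: K \subset A :|: K by move=> xA; rewrite setSU ?sub1set.
have eC1 := circuit_subset_eq circC circA1 (subset_trans sCxK (sxK _ xA1)).
have eC2 := circuit_subset_eq circC circA2 (subset_trans sCxK (sxK _ xA2)).
have eA A : [disjoint A & K] -> A = (A :|: K) :\: K.
  by move=> disjA; rewrite setDUl setDv setU0; apply/esym/setDidPl.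
by move: neqA; rewrite (eA A1) // (eA A2) // -eC1 -eC2 eqxx.
Qed.

Lemma completion_setD1 K l A x :
  A \in completions K l.+1 -> x \in A -> A :\ x \in completions (x |: K) l.
Proof.
rewrite !inE => /and3P [/eqP cardA disjA circA] xA.
rewrite setUCA setUA setD1K // circA andbT.
apply/andP; split; first by move: (cardsD1 x A); rewrite cardA xA add1n => -[<-].
rewrite disjoints_subset setCU subsetI setDE subsetIr /=.
by apply: subset_trans (subsetIl _ _) _; rewrite -disjoints_subset.
Qed.

Lemma leq_card_pivot_completions K l x :
  #|[set A in completions K l.+1 | x \in A]| <= #|completions (x |: K) l|.
Proof.
rewrite -(@card_imset_setD1 _ _ x) => [|A]; last by rewrite inE => /andP [].
apply/subset_leq_card/subsetP => _ /imsetP [A /[1!inE] /andP [AK xA] ->].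
exact: completion_setD1.
Qed.

Definition dep_packing K m :=
  exists D : nat -> {set T},
    (forall i, i < m -> ~~ indep (D i :|: K)) /\
    (forall i j, i < m -> j < m -> i != j -> [disjoint D i & D j]).

Lemma dep_packing_of_trivIset K l (G : {set {set T}}) m :
  G \subset completions K l -> trivIset G -> m <= #|G| -> dep_packing K m.
Proof.
move=> sGK tiG le_mG; pose D := nth set0 (enum G).
have DG i : i < m -> D i \in G.
  by move=> lt_im; rewrite -mem_enum mem_nth // -cardE (leq_trans lt_im).
exists D; split=> [i lt_im | i j lt_im lt_jm neq_ij].
  by move: (subsetP sGK _ (DG i lt_im)); rewrite inE => /and3P [_ _ /circuit_dep].
apply: (trivIsetP tiG); rewrite ?DG // nth_uniq ?enum_uniq // -cardE.
  exact: leq_trans lt_im le_mG.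
exact: leq_trans lt_jm le_mG.
Qed.

Lemma dep_packing_halve K x m :
  indep (x |: K) -> dep_packing (x |: K) m.*2 -> dep_packing K m.
Proof.
move=> indep_xK [D [depD disjD]].
exists (fun i => D i.*2 :|: D i.*2.+1); split=> [i lt_im | i j lt_im lt_jm neq_ij].
  by apply: dep_setU_of_setU1 indep_xK (disjD _ _ _ _ _) (depD _ _) (depD _ _); lia.
rewrite disjointsU !(disjoint_sym _ (_ :|: _)) !disjointsU.
by rewrite !disjD //; lia.
Qed.

Lemma dep_packing_of_completions l m K :
  packing_bound l m <= #|completions K l| -> dep_packing K m.
Proof.
elim: l m K => [|l IHl] m K /=.
  case/card_gt0P => A; rewrite inE => /and3P [/eqP/cards0_eq -> _].
  rewrite set0U => /circuit_dep depK; exists (fun=> set0).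
  by split=> [|i j _ _ _]; rewrite ?set0U // -setI_eq0 set0I.
set F := completions K l.+1; set N := packing_bound l m.*2 => bigF.
have F0 : set0 \notin F by rewrite inE cards0.
have [G /andP [sGF tiG] hitG] := exists_hitting_packing F0.
have [le_mG | lt_Gm] := leqP m #|G|; first exact: dep_packing_of_trivIset sGF tiG le_mG.
have [/exists_inP [x _ bigx] | ] := boolP [exists x in cover G, N < #|[set A in F | x \in A]|].
  have /card_gt1P [A1 [A2 [/[1!inE] /andP [A1F xA1] /[1!inE] /andP [A2F xA2] neqA]]] :
      1 < #|[set A in F | x \in A]|.
    exact: leq_ltn_trans (packing_bound_gt0 _ _) bigx.
  apply: (dep_packing_halve (completions_pivot_indep A1F A2F neqA xA1 xA2)).
  exact/IHl/(leq_trans (ltnW bigx))/leq_card_pivot_completions.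
rewrite negb_exists_in => /forall_inP; rewrite -/F => small.
have le_coverG : #|cover G| <= m * l.+1.
  apply: leq_trans (leq_card_cover G).1 _.
  rewrite (eq_bigr (fun=> l.+1)) ?sum_nat_const ?leq_mul2r ?(ltnW lt_Gm) ?orbT //.
  by move=> A /(subsetP sGF); rewrite inE => /and3P [/eqP].
have le_F : #|F| <= m * l.+1 * N.
  apply: leq_trans (leq_mul le_coverG (leqnn N)).
  by apply: (leq_card_hitting hitG) => x xG; rewrite leqNgt small.
by rewrite ltnNge le_F in bigF.
Qed.

Lemma disjoint_circuits_of_dep_packing d : dep_packing set0 d ->
  exists F : {set {set T}},
    [/\ #|F| = d, (forall C, C \in F -> circuit M C) &
        (forall C1 C2, C1 \in F -> C2 \in F -> C1 != C2 -> [disjoint C1 & C2])].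
Proof.
case=> D [depD disjD]; pose C i := odflt set0 [pick C | circuit M C & C \subset D i].
have circC i : i < d -> circuit M (C i) && (C i \subset D i).
  move=> lt_id; rewrite /C; case: pickP => [//|noC].
  have [C0 circC0 sC0] : exists2 C0, circuit M C0 & C0 \subset D i.
    by apply: dep_circuit; rewrite -[D i]setU0 depD.
  by have := noC C0; rewrite circC0 sC0.
have disjC i j : i < d -> j < d -> i != j -> [disjoint C i & C j].
  move=> lt_id lt_jd neq_ij; have /andP [_ sCi] := circC i lt_id.
  by have /andP [_ sCj] := circC j lt_jd; apply: disjointW sCi sCj (disjD i j _ _ _).
exists [set C (val i) | i : 'I_d]; split.
- apply: card_imset_disjoint disjC => i /circC /andP [+ _]; exact: circuit_neq0.
- by move=> _ /imsetP [i _ ->]; case/andP: (circC i (ltn_ord i)).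
- move=> _ _ /imsetP [i _ ->] /imsetP [j _ ->] neqC.
  by apply: disjC; rewrite ?ltn_ord //; apply: contraNneq neqC => ->.
Qed.

End Circuits.

Theorem lemma3p2 :
  exists g : nat -> nat -> nat,
    (forall l d, 0 < l -> 0 < d -> 0 < g l d) /\
    forall (l d : nat), 0 < l -> 0 < d ->
    forall (T : finType) (M : matroid T),
      g l d <= #|circuits_of_size M l| ->
      exists F : {set {set T}},
        [/\ #|F| = d,
            (forall C, C \in F -> circuit M C) &
            (forall C1 C2, C1 \in F -> C2 \in F -> C1 != C2 -> [disjoint C1 & C2])].
Proof.
exists packing_bound; split=> [l d _ _ | l d _ _ T M]; first exact: packing_bound_gt0.
rewrite -completions0 => /dep_packing_of_completions.
exact: disjoint_circuits_of_dep_packing.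
Qed.
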